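(* Let $m\ge 2$, $\eta\in(0,1/m]$, $k>0$, $b\ge 0$ and $\tau\in(0,1)$. For all $\pi,\pi'\in\Delta_{m,\eta}$ with $\|\pi-\pi'\|_2\le b$ and all $z\in\Delta_{m,\tau}$, $$\log p_{k\pi}(z)\ \le\ \log p_{k\pi'}(z)+\sqrt{m}\,b\,k\,|\log\tau|+(m-1)\log\Gamma(k\eta)+\log\Gamma\big(k(1-(m-1)\eta)\big)-m\log\Gamma(k/m),$$ where $p_{k\pi}(z)=\Gamma(k)\prod_{i=1}^m z_i^{k\pi_i-1}/\Gamma(k\pi_i)$ denotes the density of $\mathrm{Dir}_k(\pi)$ at $z$.
   Context: For $n\in\mathbb{N}$ and $\eta\ge 0$, the $\eta$-restricted simplex is $\Delta_{n,\eta}=\{x\in\mathbb{R}^n:\sum_{i=1}^n x_i=1,\ x_i\ge\eta\ \forall i\}$. $\Gamma$ denotes the gamma function. For $k>0$ and $\pi\in\Delta_{n,\eta}$ with $\eta>0$, the Dirichlet mechanism $\mathrm{Dir}_k(\pi)$ outputs a random point of the simplex distributed according to the Dirichlet distribution with parameter vector $k\pi$, with density $\Gamma(k)\prod_{i=1}^n x_i^{k\pi_i-1}/\Gamma(k\pi_i)$. *)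

(* concrete reals R, with Coquelicot for the improper integral
   defining the Gamma function. Vectors of R^n are functions nat -> R, of
   which only the coordinates 0..n-1 matter. *)
From Stdlib Require Import Reals Lra.
From Coquelicot Require Import Coquelicot.
Open Scope R_scope.

Fixpoint sum_lt (n : nat) (f : nat -> R) : R :=
  match n with O => 0 | S p => sum_lt p f + f p end.

Fixpoint prod_lt (n : nat) (f : nat -> R) : R :=
  match n with O => 1 | S p => prod_lt p f * f p end.

Definition norm2 (n : nat) (x : nat -> R) : R :=
  sqrt (sum_lt n (fun i => x i ^ 2)).

Definition restricted_simplex (n : nat) (eta : R) (x : nat -> R) : Prop :=
  sum_lt n x = 1 /\ forall i : nat, (i < n)%nat -> eta <= x i.

Definition Gamma (x : R) : R :=
  RInt_gen (fun t => Rpower t (x - 1) * exp (- t))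
    (at_right 0) (Rbar_locally p_infty).

Definition dirichlet_density (n : nat) (k : R) (pi z : nat -> R) : R :=
  Gamma k * prod_lt n (fun i => Rpower (z i) (k * pi i - 1) / Gamma (k * pi i)).

(* Write ln p_{kπ}(z) = ln Γ(k) + Σ_i (kπ_i - 1) ln z_i - Σ_i ln Γ(kπ_i).  The
   difference ln p_{kπ}(z) - ln p_{kπ'}(z) splits into
   - a data term Σ_i k(π_i - π'_i) ln z_i, bounded by √m ‖π - π'‖_2 k |ln τ|
     because |ln z_i| ≤ |ln τ| on Δ_{m,τ} and ‖·‖_1 ≤ √m ‖·‖_2;
   - a normalising term Σ_i ln Γ(kπ'_i) - Σ_i ln Γ(kπ_i).  Since ln Γ is
     convex, Jensen's inequality gives Σ_i ln Γ(kπ_i) ≥ m ln Γ(k/m), and a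
     convex function summed over Δ_{m,η} is largest at a vertex, giving
     Σ_i ln Γ(kπ'_i) ≤ (m-1) ln Γ(kη) + ln Γ(k(1 - (m-1)η)). *)

From Stdlib Require Import Reals Lra Lia Classical_Prop.
From Coquelicot Require Import Coquelicot.
Open Scope R_scope.

Lemma sum_lt_ext n f g :
  (forall i, (i < n)%nat -> f i = g i) -> sum_lt n f = sum_lt n g.
Proof.
induction n as [|n IH]; intros H; simpl; [reflexivity|].
rewrite IH by (intros; apply H; lia).
rewrite H by lia; reflexivity.
Qed.

Lemma sum_lt_le n f g :
  (forall i, (i < n)%nat -> f i <= g i) -> sum_lt n f <= sum_lt n g.
Proof.
induction n as [|n IH]; intros H; simpl; [lra|].
assert (f n <= g n) by (apply H; lia).
assert (sum_lt n f <= sum_lt n g) by (apply IH; intros; apply H; lia).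
lra.
Qed.

Lemma sum_lt_plus n f g : sum_lt n (fun i => f i + g i) = sum_lt n f + sum_lt n g.
Proof. induction n as [|n IH]; simpl; [ring|]. rewrite IH; ring. Qed.

Lemma sum_lt_minus n f g : sum_lt n (fun i => f i - g i) = sum_lt n f - sum_lt n g.
Proof. induction n as [|n IH]; simpl; [ring|]. rewrite IH; ring. Qed.

Lemma sum_lt_scal n c f : sum_lt n (fun i => c * f i) = c * sum_lt n f.
Proof. induction n as [|n IH]; simpl; [ring|]. rewrite IH; ring. Qed.

Lemma sum_lt_const n a : sum_lt n (fun _ => a) = INR n * a.
Proof. induction n as [|n IH]; simpl sum_lt; [simpl; ring|]. rewrite IH, S_INR; ring. Qed.

Lemma sum_lt_affine n a c f :
  sum_lt n (fun i => a + c * f i) = INR n * a + c * sum_lt n f.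
Proof. rewrite sum_lt_plus, sum_lt_scal, sum_lt_const; reflexivity. Qed.

Lemma sum_lt_pos n f :
  (0 < n)%nat -> (forall i, (i < n)%nat -> 0 < f i) -> 0 < sum_lt n f.
Proof.
induction n as [|n IH]; intros Hn H; [lia|]. simpl.
assert (0 < f n) by (apply H; lia).
destruct n as [|n]; [simpl; lra|].
assert (0 < sum_lt (S n) f) by (apply IH; [lia | intros; apply H; lia]).
lra.
Qed.

Lemma sum_lt_ge_term n f eta i :
  (i < n)%nat -> (forall j, (j < n)%nat -> eta <= f j) ->
  f i + INR (n - 1) * eta <= sum_lt n f.
Proof.
induction n as [|n IH]; intros Hi H; [lia|]. simpl sum_lt.
replace (S n - 1)%nat with n by lia.
assert (Hrest : INR n * eta <= sum_lt n f).
{ rewrite <- sum_lt_const. apply sum_lt_le. intros; apply H; lia. }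
destruct (Nat.eq_dec i n) as [->|Hne]; [lra|].
assert (f i + INR (n - 1) * eta <= sum_lt n f) by (apply IH; [lia | intros; apply H; lia]).
assert (eta <= f n) by (apply H; lia).
assert (INR n * eta = INR (n - 1) * eta + eta)
  by (replace (INR n) with (INR (S (n - 1))) by (f_equal; lia); rewrite S_INR; ring).
lra.
Qed.

Lemma prod_lt_pos n f : (forall i, (i < n)%nat -> 0 < f i) -> 0 < prod_lt n f.
Proof.
induction n as [|n IH]; intros H; simpl; [lra|].
apply Rmult_lt_0_compat; [apply IH; intros |]; apply H; lia.
Qed.

Lemma ln_prod_lt n f :
  (forall i, (i < n)%nat -> 0 < f i) -> ln (prod_lt n f) = sum_lt n (fun i => ln (f i)).
Proof.
induction n as [|n IH]; intros H; simpl; [apply ln_1|].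
rewrite ln_mult by (try apply prod_lt_pos; intros; apply H; lia).
rewrite IH by (intros; apply H; lia). reflexivity.
Qed.

Lemma restricted_simplex_le n eta x i :
  restricted_simplex n eta x -> (i < n)%nat -> x i <= 1 - INR (n - 1) * eta.
Proof.
intros [Hsum Hlow] Hi.
pose proof (sum_lt_ge_term n x eta i Hi Hlow). lra.
Qed.

Lemma restricted_simplex_pos n eta x :
  0 < eta -> restricted_simplex n eta x -> forall i, (i < n)%nat -> 0 < x i.
Proof. intros Heta [_ Hlow] i Hi. specialize (Hlow i Hi). lra. Qed.

(* ‖d‖_1 ≤ √n ‖d‖_2, from 0 ≤ Σ (|d_i| - A/n)² = ‖d‖_2² - A²/n with A = ‖d‖_1. *)
Lemma sum_abs_le_sqrt_norm2 n d :
  sum_lt n (fun i => Rabs (d i)) <= sqrt (INR n) * norm2 n d.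
Proof.
unfold norm2.
set (A := sum_lt n (fun i => Rabs (d i))).
set (Q := sum_lt n (fun i => d i ^ 2)).
destruct n as [|n'].
{ unfold A; simpl. rewrite sqrt_0; lra. }
assert (Hn : 0 < INR (S n')) by (apply lt_0_INR; lia).
assert (HA : 0 <= A).
{ unfold A. rewrite <- (Rmult_0_r (INR (S n'))), <- sum_lt_const.
  apply sum_lt_le. intros; apply Rabs_pos. }
assert (Hvar : 0 <= Q - A ^ 2 / INR (S n')).
{ set (c := A / INR (S n')).
  assert (E : sum_lt (S n') (fun i => (Rabs (d i) - c) ^ 2)
              = Q - A ^ 2 / INR (S n')).
  { rewrite (sum_lt_ext _ _ (fun i => (c ^ 2 + (-2 * c) * Rabs (d i)) + d i ^ 2))
      by (intros; rewrite <- (pow2_abs (d i)); ring).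
    rewrite sum_lt_plus, sum_lt_affine. fold A Q. unfold c. field. lra. }
  rewrite <- E, <- (Rmult_0_r (INR (S n'))), <- sum_lt_const.
  apply sum_lt_le. intros; apply pow2_ge_0. }
rewrite <- sqrt_mult_alt by lra.
rewrite <- (sqrt_pow2 A HA).
apply sqrt_le_1_alt.
apply Rmult_le_reg_r with (/ INR (S n')); [apply Rinv_0_lt_compat; lra|].
replace (INR (S n') * Q * / INR (S n')) with Q by (field; lra).
unfold Rdiv in Hvar. lra.
Qed.

(** Convex functions on (0, ∞): Jensen's inequality and maximisation at a
    vertex of the restricted simplex. *)

Section ConvexOnPositiveReals.

Variable g : R -> R.
Hypothesis g_convex : forall a b t, 0 < a -> 0 < b -> 0 <= t <= 1 ->
  g (t * a + (1 - t) * b) <= t * g a + (1 - t) * g b.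

Lemma convex_below_chord lo hi x : 0 < lo -> lo <= x <= hi ->
  g x <= g lo + (g hi - g lo) / (hi - lo) * (x - lo).
Proof.
intros Hlo Hx.
destruct (Req_dec hi lo) as [E|Hne].
{ replace x with lo by lra. replace (lo - lo) with 0 by ring. lra. }
assert (Hlt : lo < hi) by (apply Rnot_le_lt; intro; apply Hne; lra).
set (t := (x - lo) / (hi - lo)).
assert (Ht : 0 <= t <= 1).
{ unfold t; split.
  - apply Rdiv_le_0_compat; lra.
  - apply (Rdiv_le_1 (x - lo) (hi - lo)); lra. }
pose proof (g_convex hi lo t ltac:(lra) Hlo Ht) as Hc.
replace (t * hi + (1 - t) * lo) with x in Hc by (unfold t; field; lra).
replace (g lo + (g hi - g lo) / (hi - lo) * (x - lo))
  with (t * g hi + (1 - t) * g lo) by (unfold t; field; lra).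
exact Hc.
Qed.

Lemma convex_jensen n x : (0 < n)%nat -> (forall i, (i < n)%nat -> 0 < x i) ->
  INR n * g (sum_lt n x / INR n) <= sum_lt n (fun i => g (x i)).
Proof.
induction n as [|n IH]; intros Hn Hx; [lia|].
destruct n as [|n].
{ simpl. replace ((0 + x 0%nat) / 1) with (x 0%nat) by field. lra. }
set (N := INR (S n)). set (A := sum_lt (S n) x).
assert (HN : 0 < N) by (apply lt_0_INR; lia).
assert (HA : 0 < A) by (apply sum_lt_pos; [lia | intros; apply Hx; lia]).
assert (Hlast : 0 < x (S n)) by (apply Hx; lia).
assert (IHn : N * g (A / N) <= sum_lt (S n) (fun i => g (x i)))
  by (apply IH; [lia | intros; apply Hx; lia]).
change (INR (S (S n)) * g ((A + x (S n)) / INR (S (S n)))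
        <= sum_lt (S n) (fun i => g (x i)) + g (x (S n))).
rewrite S_INR. fold N.
assert (Hw : 0 <= N / (N + 1) <= 1).
{ split; [apply Rdiv_le_0_compat | apply (Rdiv_le_1 N (N + 1))]; lra. }
pose proof (g_convex (A / N) (x (S n)) (N / (N + 1))
              ltac:(apply Rdiv_lt_0_compat; lra) Hlast Hw) as Hc.
replace (N / (N + 1) * (A / N) + (1 - N / (N + 1)) * x (S n))
  with ((A + x (S n)) / (N + 1)) in Hc by (field; lra).
apply Rmult_le_compat_l with (r := N + 1) in Hc; [|lra].
replace ((N + 1) * (N / (N + 1) * g (A / N) + (1 - N / (N + 1)) * g (x (S n))))
  with (N * g (A / N) + g (x (S n))) in Hc by (field; lra).
lra.
Qed.

(* On Δ_{n,η} the sum Σ g(x_i) is largest at a vertex, where n - 1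
   coordinates equal η: below the chord, the sum becomes affine in Σ x_i = 1. *)
Lemma convex_sum_le_vertex n eta x :
  (1 <= n)%nat -> 0 < eta -> restricted_simplex n eta x ->
  sum_lt n (fun i => g (x i)) <= INR (n - 1) * g eta + g (1 - INR (n - 1) * eta).
Proof.
intros Hn Heta Hx.
set (L := 1 - INR (n - 1) * eta).
set (D := (g L - g eta) / (L - eta)).
assert (Hn1 : INR (n - 1) = INR n - 1) by (rewrite minus_INR by lia; reflexivity).
destruct Hx as [Hsum Hlow].
assert (Hchord : forall i, (i < n)%nat -> g (x i) <= (g eta - eta * D) + D * x i).
{ intros i Hi.
  assert (HxL : x i <= L) by exact (restricted_simplex_le n eta x i (conj Hsum Hlow) Hi).
  pose proof (convex_below_chord eta L (x i) Heta (conj (Hlow i Hi) HxL)).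
  unfold D. lra. }
apply Rle_trans with (sum_lt n (fun i => (g eta - eta * D) + D * x i));
  [apply sum_lt_le; exact Hchord|].
rewrite sum_lt_affine, Hsum.
assert (Hvertex : D * (L - eta) = g L - g eta).
{ destruct (Req_dec L eta) as [E|Hne].
  - rewrite E. ring.
  - unfold D. field. lra. }
assert (L - eta = 1 - INR n * eta) by (unfold L; rewrite Hn1; ring).
rewrite Hn1. nra.
Qed.

End ConvexOnPositiveReals.

(** Improper integrals over (0, ∞) of nonnegative functions. *)

Definition partial_integrals (f : R -> R) (y : R) : Prop :=
  exists p q, 0 < p <= q /\ y = RInt f p q.

Section NonnegativeIntegrand.

Variable f : R -> R.
Hypothesis f_integrable : forall p q, 0 < p <= q -> ex_RInt f p q.
Hypothesis f_nonneg : forall s, 0 < s -> 0 <= f s.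

Lemma RInt_le_larger_interval a p q b :
  0 < a <= p -> p <= q -> q <= b -> RInt f p q <= RInt f a b.
Proof.
intros Ha Hpq Hb.
rewrite <- (RInt_Chasles f a p b) by (apply f_integrable; lra).
rewrite <- (RInt_Chasles f p q b) by (apply f_integrable; lra).
assert (0 <= RInt f a p)
  by (apply RInt_ge_0; [lra | apply f_integrable; lra | intros; apply f_nonneg; lra]).
assert (0 <= RInt f q b)
  by (apply RInt_ge_0; [lra | apply f_integrable; lra | intros; apply f_nonneg; lra]).
unfold plus; simpl. lra.
Qed.

Lemma improper_integral_sup M :
  (forall p q, 0 < p <= q -> RInt f p q <= M) ->
  exists l, is_lub (partial_integrals f) l /\
            is_RInt_gen f (at_right 0) (Rbar_locally p_infty) l.
Proof.
intros HM.
destruct (completeness (partial_integrals f)) as [l [Hub Hleast]].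
- exists M. intros y [p [q [Hpq ->]]]. now apply HM.
- exists (RInt f 1 1), 1, 1. split; [lra | reflexivity].
- exists l. split; [split; assumption|].
  intros P [eps HP].
  assert (Hclose : exists p0 q0, 0 < p0 <= q0 /\ l - eps < RInt f p0 q0).
  { apply NNPP. intros Hfar.
    assert (l <= l - eps); [|destruct eps; simpl in *; lra].
    apply Hleast. intros y [p [q [Hpq ->]]].
    apply Rnot_lt_le. intros Hlt. apply Hfar. now exists p, q. }
  destruct Hclose as [p0 [q0 [Hpq0 Hl0]]].
  apply (Filter_prod _ _ _ (fun a => 0 < a < p0) (fun b => q0 < b)).
  + exists (mkposreal p0 ltac:(lra)). intros u Hu Hu0. split; [exact Hu0|].
    apply Rabs_def2 in Hu. unfold minus, plus, opp in Hu; simpl in Hu. lra.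
  + exists q0. auto.
  + intros a b Ha Hb. simpl.
    assert (Hab : ex_RInt f a b) by (apply f_integrable; lra).
    exists (RInt f a b). split; [exact (RInt_correct f a b Hab)|].
    apply HP.
    assert (RInt f a b <= l) by (apply Hub; exists a, b; split; [lra | reflexivity]).
    assert (RInt f p0 q0 <= RInt f a b) by (apply RInt_le_larger_interval; lra).
    apply Rabs_def1; destruct eps; simpl in *; unfold minus, plus, opp; simpl; lra.
Qed.

End NonnegativeIntegrand.

(** The Gamma integrand and an integrable majorant. *)

Lemma exp_le_compat a b : a <= b -> exp a <= exp b.
Proof. intros [Hlt | Heq]; [left; now apply exp_increasing | right; now rewrite Heq]. Qed.

Definition gamma_integrand (x t : R) : R := exp ((x - 1) * ln t - t).

Lemma gamma_integrand_eq x t :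
  0 < t -> Rpower t (x - 1) * exp (- t) = gamma_integrand x t.
Proof. intros. unfold Rpower, gamma_integrand. rewrite <- exp_plus. f_equal; ring. Qed.

Lemma gamma_integrand_continuous x t : 0 < t -> continuous (gamma_integrand x) t.
Proof.
intros Ht. apply (ex_derive_continuous (K := R_AbsRing) (V := R_NormedModule)).
unfold gamma_integrand. auto_derive. lra.
Qed.

Lemma ex_RInt_gamma_integrand x p q : 0 < p <= q -> ex_RInt (gamma_integrand x) p q.
Proof.
intros Hpq. apply (ex_RInt_continuous (V := R_CompleteNormedModule)). intros t Ht.
rewrite Rmin_left in Ht by lra. rewrite Rmax_right in Ht by lra.
apply gamma_integrand_continuous; lra.
Qed.

(* The constant max_{t>0} (1+t)^(x+1) e^(-t) = (x+1)^(x+1) e^(-x). *)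
Definition gamma_majorant_const (x : R) : R := exp (1 + (x + 1) * (ln (x + 1) - 1)).

(* c t^(x-1) (1+t)^(-x-1) dominates the integrand, and has the explicit
   primitive c (t/(1+t))^x / x, which stays below c / x. *)
Definition gamma_majorant (x t : R) : R :=
  gamma_majorant_const x * exp (x * ln (t / (1 + t))) / (t * (1 + t)).

Definition gamma_majorant_primitive (x t : R) : R :=
  gamma_majorant_const x * exp (x * ln (t / (1 + t))) / x.

Lemma gamma_majorant_derive x t :
  0 < x -> 0 < t -> is_derive (gamma_majorant_primitive x) t (gamma_majorant x t).
Proof.
intros Hx Ht. unfold gamma_majorant_primitive, gamma_majorant. auto_derive.
- repeat split; try lra. apply Rdiv_lt_0_compat; lra.
- unfold Rdiv. field. repeat split; lra.
Qed.

Lemma gamma_majorant_continuous x t : 0 < x -> 0 < t -> continuous (gamma_majorant x) t.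
Proof.
intros Hx Ht. apply (ex_derive_continuous (K := R_AbsRing) (V := R_NormedModule)).
unfold gamma_majorant. auto_derive. repeat split; try lra.
- apply Rdiv_lt_0_compat; lra.
- apply Rgt_not_eq, Rmult_lt_0_compat; lra.
Qed.

Lemma gamma_majorant_primitive_bounds x t :
  0 < x -> 0 < t -> 0 <= gamma_majorant_primitive x t <= gamma_majorant_const x / x.
Proof.
intros Hx Ht. unfold gamma_majorant_primitive.
assert (Hc := exp_pos (1 + (x + 1) * (ln (x + 1) - 1))).
fold (gamma_majorant_const x) in Hc.
assert (Hratio : ln (t / (1 + t)) <= 0).
{ rewrite <- ln_1. apply ln_le; [apply Rdiv_lt_0_compat; lra|].
  apply (Rdiv_le_1 t (1 + t)); lra. }
assert (Hpow : exp (x * ln (t / (1 + t))) <= 1).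
{ rewrite <- exp_0 at 2. apply exp_le_compat. nra. }
pose proof (exp_pos (x * ln (t / (1 + t)))).
split.
- apply Rdiv_le_0_compat; [|lra]. apply Rmult_le_pos; lra.
- apply Rmult_le_compat_r; [left; apply Rinv_0_lt_compat; lra|]. nra.
Qed.

Lemma ln_le_sub_1 u : 0 < u -> ln u <= u - 1.
Proof. intros Hu. pose proof (exp_ineq1_le (ln u)). rewrite exp_ln in H by lra. lra. Qed.

(* Pointwise domination, i.e. e^(-t) (1+t)^(x+1) ≤ (x+1)^(x+1) e^(-x):
   the exponent is maximal at 1 + t = x + 1, by ln u ≤ u - 1. *)
Lemma gamma_integrand_le_majorant x t :
  0 < x -> 0 < t -> gamma_integrand x t <= gamma_majorant x t.
Proof.
intros Hx Ht.
assert (E : gamma_majorant x t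
            = exp (1 + (x + 1) * (ln (x + 1) - 1) + x * (ln t - ln (1 + t))
                   - (ln t + ln (1 + t)))).
{ unfold gamma_majorant, gamma_majorant_const. rewrite ln_div by lra.
  set (c0 := 1 + (x + 1) * (ln (x + 1) - 1)). set (A := x * (ln t - ln (1 + t))).
  replace (c0 + A - (ln t + ln (1 + t))) with (c0 + A + - (ln t + ln (1 + t))) by ring.
  rewrite exp_plus, exp_plus, exp_Ropp, exp_plus, !exp_ln by lra. field. lra. }
rewrite E. unfold gamma_integrand.
apply exp_le_compat.
assert (Hln := ln_le_sub_1 ((1 + t) / (x + 1)) ltac:(apply Rdiv_lt_0_compat; lra)).
rewrite ln_div in Hln by lra.
assert (Hscaled : (x + 1) * (ln (1 + t) - ln (x + 1)) <= t - x).
{ replace (t - x) with ((x + 1) * ((1 + t) / (x + 1) - 1)) by (field; lra).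
  apply Rmult_le_compat_l; lra. }
nra.
Qed.

(* Integrals of the integrand over compact subintervals of (0, ∞) are
   uniformly bounded, by the fundamental theorem of calculus for the majorant. *)
Lemma gamma_partial_integral_bound x p q :
  0 < x -> 0 < p <= q -> RInt (gamma_integrand x) p q <= gamma_majorant_const x / x.
Proof.
intros Hx Hpq.
assert (HI : is_RInt (gamma_majorant x) p q
               (gamma_majorant_primitive x q - gamma_majorant_primitive x p)).
{ apply (is_RInt_derive (V := R_CompleteNormedModule)); intros t Ht;
    rewrite Rmin_left in Ht by lra; rewrite Rmax_right in Ht by lra.
  - apply gamma_majorant_derive; lra.
  - apply gamma_majorant_continuous; lra. }
apply Rle_trans with (RInt (gamma_majorant x) p q).
- apply RInt_le; [lra | apply ex_RInt_gamma_integrand; lra | eexists; exact HI |].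
  intros t Ht. apply gamma_integrand_le_majorant; lra.
- rewrite (is_RInt_unique _ _ _ _ HI).
  pose proof (gamma_majorant_primitive_bounds x p Hx ltac:(lra)).
  pose proof (gamma_majorant_primitive_bounds x q Hx ltac:(lra)).
  unfold minus, plus, opp; simpl. lra.
Qed.

Lemma Gamma_is_lub x : 0 < x -> is_lub (partial_integrals (gamma_integrand x)) (Gamma x).
Proof.
intros Hx.
set (f := fun t => Rpower t (x - 1) * exp (- t)).
assert (Hfh : forall p q, 0 < p <= q -> RInt f p q = RInt (gamma_integrand x) p q).
{ intros p q Hpq. apply RInt_ext. intros t Ht.
  rewrite Rmin_left in Ht by lra. apply gamma_integrand_eq; lra. }
assert (Hsame : forall y, partial_integrals f y <-> partial_integrals (gamma_integrand x) y).
{ intros y; split; intros [p [q [Hpq ->]]]; exists p, q;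
    split; auto; rewrite Hfh; auto. }
assert (Hint : forall p q, 0 < p <= q -> ex_RInt f p q).
{ intros p q Hpq. apply (ex_RInt_ext (gamma_integrand x)); [|apply ex_RInt_gamma_integrand; lra].
  intros t Ht. rewrite Rmin_left in Ht by lra. symmetry. apply gamma_integrand_eq. lra. }
assert (Hnonneg : forall s, 0 < s -> 0 <= f s).
{ intros s Hs. unfold f, Rpower. apply Rlt_le, Rmult_lt_0_compat; apply exp_pos. }
destruct (improper_integral_sup f Hint Hnonneg (gamma_majorant_const x / x))
  as [l [[Hub Hleast] Hlim]].
- intros p q Hpq. rewrite Hfh by lra. apply gamma_partial_integral_bound; lra.
- assert (HG : Gamma x = l)
    by (unfold Gamma; apply (is_RInt_gen_unique (V := R_CompleteNormedModule)); exact Hlim).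
  rewrite HG.
  split.
  + intros y Hy. apply Hub, Hsame, Hy.
  + intros B HB. apply Hleast. intros y Hy. apply HB, Hsame, Hy.
Qed.

Lemma Gamma_pos x : 0 < x -> 0 < Gamma x.
Proof.
intros Hx. apply Rlt_le_trans with (RInt (gamma_integrand x) 1 2).
- apply RInt_gt_0; [lra | intros; apply exp_pos |].
  intros t Ht. apply gamma_integrand_continuous; lra.
- apply (Gamma_is_lub x Hx). exists 1, 2. split; [lra | reflexivity].
Qed.

(* Convexity of exp, from its tangent lines: exp y ≥ exp c (1 + (y - c)). *)
Lemma exp_convex t X Y : 0 <= t <= 1 ->
  exp (t * X + (1 - t) * Y) <= t * exp X + (1 - t) * exp Y.
Proof.
intros Ht. set (c := t * X + (1 - t) * Y).
assert (Htangent : forall y, exp c * (1 + (y - c)) <= exp y).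
{ intros y. replace (exp y) with (exp c * exp (y - c))
    by (rewrite <- exp_plus; f_equal; ring).
  apply Rmult_le_compat_l; [left; apply exp_pos | apply exp_ineq1_le]. }
pose proof (Htangent X). pose proof (Htangent Y).
assert (t * (exp c * (1 + (X - c))) <= t * exp X) by (apply Rmult_le_compat_l; lra).
assert ((1 - t) * (exp c * (1 + (Y - c))) <= (1 - t) * exp Y) by (apply Rmult_le_compat_l; lra).
assert (t * (exp c * (1 + (X - c))) + (1 - t) * (exp c * (1 + (Y - c))) = exp c)
  by (unfold c; ring).
lra.
Qed.

Lemma convex_combination_pos a b t : 0 < a -> 0 < b -> 0 <= t <= 1 ->
  0 < t * a + (1 - t) * b.
Proof.
intros Ha Hb Ht.
assert (0 <= t * a) by (apply Rmult_le_pos; lra).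
assert (0 <= (1 - t) * b) by (apply Rmult_le_pos; lra).
destruct (Req_dec t 0) as [Ht0|Ht0].
- subst t. lra.
- assert (0 < t * a) by (apply Rmult_lt_0_compat; lra). lra.
Qed.

(* Log-convexity of Gamma, Γ(ta + (1-t)b) ≤ Γ(a)^t Γ(b)^(1-t) (Hölder's
   inequality for the Gamma integral): by convexity of exp the integrand at
   ta + (1-t)b is pointwise below α·(integrand at a) + β·(integrand at b),
   with weights α, β chosen so that αΓ(a) + βΓ(b) = Γ(a)^t Γ(b)^(1-t). *)
Lemma Gamma_log_convex a b t : 0 < a -> 0 < b -> 0 <= t <= 1 ->
  Gamma (t * a + (1 - t) * b) <= exp (t * ln (Gamma a) + (1 - t) * ln (Gamma b)).
Proof.
intros Ha Hb Ht.
assert (Hc := convex_combination_pos a b t Ha Hb Ht).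
set (c := t * a + (1 - t) * b) in *.
set (LA := ln (Gamma a)). set (LB := ln (Gamma b)).
set (al := t * exp ((1 - t) * (LB - LA))). set (be := (1 - t) * exp (- t * (LB - LA))).
assert (Hal : 0 <= al) by (apply Rmult_le_pos; [lra | left; apply exp_pos]).
assert (Hbe : 0 <= be) by (apply Rmult_le_pos; [lra | left; apply exp_pos]).
assert (Hpointwise : forall s, 0 < s -> gamma_integrand c s
          <= plus (scal al (gamma_integrand a s)) (scal be (gamma_integrand b s))).
{ intros s Hs. unfold plus, scal; simpl. unfold mult; simpl.
  unfold gamma_integrand, al, be. rewrite !Rmult_assoc, <- !exp_plus.
  replace ((c - 1) * ln s - s)
    with (t * ((1 - t) * (LB - LA) + ((a - 1) * ln s - s))
          + (1 - t) * (- t * (LB - LA) + ((b - 1) * ln s - s))) by (unfold c; ring).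
  apply exp_convex; exact Ht. }
assert (Hweights : al * Gamma a + be * Gamma b = exp (t * LA + (1 - t) * LB)).
{ assert (Gamma a = exp LA) by (unfold LA; rewrite exp_ln; [reflexivity | apply Gamma_pos; lra]).
  assert (Gamma b = exp LB) by (unfold LB; rewrite exp_ln; [reflexivity | apply Gamma_pos; lra]).
  replace (Gamma a) with (exp LA). replace (Gamma b) with (exp LB).
  unfold al, be. rewrite !Rmult_assoc, <- !exp_plus.
  replace ((1 - t) * (LB - LA) + LA) with (t * LA + (1 - t) * LB) by ring.
  replace (- t * (LB - LA) + LB) with (t * LA + (1 - t) * LB) by ring.
  ring. }
rewrite <- Hweights. apply (Gamma_is_lub c Hc). intros y [p [q [Hpq ->]]].
assert (Hexa := ex_RInt_gamma_integrand a p q Hpq).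
assert (Hexb := ex_RInt_gamma_integrand b p q Hpq).
apply Rle_trans
  with (RInt (fun s => plus (scal al (gamma_integrand a s)) (scal be (gamma_integrand b s))) p q).
- apply RInt_le; [lra | apply ex_RInt_gamma_integrand; lra | |].
  + apply (ex_RInt_plus (V := R_NormedModule)); apply (ex_RInt_scal (V := R_NormedModule)); assumption.
  + intros s Hs. apply Hpointwise. lra.
- rewrite (RInt_plus (V := R_CompleteNormedModule))
    by (apply (ex_RInt_scal (V := R_NormedModule)); assumption).
  rewrite !(RInt_scal (V := R_CompleteNormedModule)) by assumption.
  unfold plus, scal; simpl. unfold mult; simpl.
  assert (RInt (gamma_integrand a) p q <= Gamma a)
    by (apply (Gamma_is_lub a Ha); exists p, q; auto).
  assert (RInt (gamma_integrand b) p q <= Gamma b)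
    by (apply (Gamma_is_lub b Hb); exists p, q; auto).
  assert (al * RInt (gamma_integrand a) p q <= al * Gamma a) by (apply Rmult_le_compat_l; lra).
  assert (be * RInt (gamma_integrand b) p q <= be * Gamma b) by (apply Rmult_le_compat_l; lra).
  lra.
Qed.

Lemma ln_Gamma_scaled_convex k : 0 < k ->
  forall a b t, 0 < a -> 0 < b -> 0 <= t <= 1 ->
  ln (Gamma (k * (t * a + (1 - t) * b)))
  <= t * ln (Gamma (k * a)) + (1 - t) * ln (Gamma (k * b)).
Proof.
intros Hk a b t Ha Hb Ht.
assert (Hka : 0 < k * a) by (apply Rmult_lt_0_compat; lra).
assert (Hkb : 0 < k * b) by (apply Rmult_lt_0_compat; lra).
replace (k * (t * a + (1 - t) * b)) with (t * (k * a) + (1 - t) * (k * b)) by ring.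
rewrite <- (ln_exp (t * ln (Gamma (k * a)) + (1 - t) * ln (Gamma (k * b)))).
apply ln_le; [apply Gamma_pos, convex_combination_pos | apply Gamma_log_convex]; assumption.
Qed.

Lemma ln_dirichlet_density n k pi z : 0 < k ->
  (forall i, (i < n)%nat -> 0 < pi i) -> (forall i, (i < n)%nat -> 0 < z i) ->
  ln (dirichlet_density n k pi z) =
  ln (Gamma k) + sum_lt n (fun i => (k * pi i - 1) * ln (z i) - ln (Gamma (k * pi i))).
Proof.
intros Hk Hpi Hz.
assert (HG : forall i, (i < n)%nat -> 0 < Gamma (k * pi i))
  by (intros; apply Gamma_pos, Rmult_lt_0_compat; auto).
assert (Hfactor : forall i, (i < n)%nat -> 0 < Rpower (z i) (k * pi i - 1) / Gamma (k * pi i))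
  by (intros; apply Rdiv_lt_0_compat; [apply exp_pos | auto]).
unfold dirichlet_density.
rewrite ln_mult by (apply Gamma_pos || apply prod_lt_pos; assumption).
rewrite ln_prod_lt by assumption.
f_equal. apply sum_lt_ext. intros i Hi.
rewrite ln_div by (apply exp_pos || auto).
unfold Rpower. rewrite ln_exp. reflexivity.
Qed.

Lemma Rabs_ln_le tau u : 0 < tau -> tau <= u <= 1 -> Rabs (ln u) <= Rabs (ln tau).
Proof.
intros Htau Hu.
assert (ln tau <= ln u) by (apply ln_le; lra).
assert (ln u <= 0) by (rewrite <- ln_1; apply ln_le; lra).
rewrite !Rabs_left1 by lra. lra.
Qed.

Lemma data_term_lipschitz n k b tau pi pi' z :
  0 < k -> 0 < tau -> restricted_simplex n tau z ->
  norm2 n (fun i => pi i - pi' i) <= b ->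
  sum_lt n (fun i => (k * pi i - 1) * ln (z i))
  - sum_lt n (fun i => (k * pi' i - 1) * ln (z i))
  <= sqrt (INR n) * b * k * Rabs (ln tau).
Proof.
intros Hk Htau Hz Hdist.
rewrite <- sum_lt_minus.
apply Rle_trans
  with (sum_lt n (fun i => (k * Rabs (ln tau)) * Rabs (pi i - pi' i))).
- apply sum_lt_le. intros i Hi.
  assert (Hzi : tau <= z i <= 1).
  { split; [apply (proj2 Hz); exact Hi|].
    pose proof (restricted_simplex_le n tau z i Hz Hi).
    assert (0 <= INR (n - 1) * tau) by (apply Rmult_le_pos; [apply pos_INR | lra]).
    lra. }
  pose proof (Rabs_ln_le tau (z i) Htau Hzi) as Hln.
  replace ((k * pi i - 1) * ln (z i) - (k * pi' i - 1) * ln (z i))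
    with (k * ((pi i - pi' i) * ln (z i))) by ring.
  rewrite Rmult_assoc. apply Rmult_le_compat_l; [lra|].
  apply Rle_trans with (Rabs ((pi i - pi' i) * ln (z i))); [apply Rle_abs|].
  rewrite Rabs_mult, Rmult_comm.
  apply Rmult_le_compat_r; [apply Rabs_pos | exact Hln].
- rewrite sum_lt_scal.
  pose proof (sum_abs_le_sqrt_norm2 n (fun i => pi i - pi' i)) as Hnorms.
  assert (sqrt (INR n) * norm2 n (fun i => pi i - pi' i) <= sqrt (INR n) * b)
    by (apply Rmult_le_compat_l; [apply sqrt_pos | exact Hdist]).
  assert (0 <= k * Rabs (ln tau)) by (apply Rmult_le_pos; [lra | apply Rabs_pos]).
  replace (sqrt (INR n) * b * k * Rabs (ln tau))
    with (k * Rabs (ln tau) * (sqrt (INR n) * b)) by ring.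
  apply Rmult_le_compat_l; lra.
Qed.

Theorem mainTheorem3 (m : nat) (eta k b tau : R) (pi pi' z : nat -> R) :
  (2 <= m)%nat ->
  0 < eta -> eta <= 1 / INR m ->
  0 < k -> 0 <= b -> 0 < tau < 1 ->
  restricted_simplex m eta pi ->
  restricted_simplex m eta pi' ->
  norm2 m (fun i => pi i - pi' i) <= b ->
  restricted_simplex m tau z ->
  ln (dirichlet_density m k pi z)
  <= ln (dirichlet_density m k pi' z)
     + sqrt (INR m) * b * k * Rabs (ln tau)
     + INR (m - 1) * ln (Gamma (k * eta))
     + ln (Gamma (k * (1 - INR (m - 1) * eta)))
     - INR m * ln (Gamma (k / INR m)).
Proof.
intros Hm Heta _ Hk _ Htau Hpi Hpi' Hdist Hz.
pose proof (restricted_simplex_pos m eta pi Heta Hpi) as Hpi_pos.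
pose proof (restricted_simplex_pos m eta pi' Heta Hpi') as Hpi'_pos.
pose proof (restricted_simplex_pos m tau z (proj1 Htau) Hz) as Hz_pos.
rewrite (ln_dirichlet_density m k pi z Hk Hpi_pos Hz_pos),
  (ln_dirichlet_density m k pi' z Hk Hpi'_pos Hz_pos), !sum_lt_minus.
pose proof (data_term_lipschitz m k b tau pi pi' z Hk (proj1 Htau) Hz Hdist) as Hdata.
pose proof (convex_jensen _ (ln_Gamma_scaled_convex k Hk) m pi ltac:(lia) Hpi_pos)
  as Hjensen.
pose proof (convex_sum_le_vertex _ (ln_Gamma_scaled_convex k Hk) m eta pi'
              ltac:(lia) Heta Hpi') as Hvertex.
cbv beta in Hjensen, Hvertex.
rewrite (proj1 Hpi) in Hjensen.
replace (k * (1 / INR m)) with (k / INR m) in Hjensen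
  by (field; apply not_0_INR; lia).
lra.
Qed.
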